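(* Let $s\geq1$, let $(g_{\mu\nu})_{0\le\mu,\nu\le s}$ be a real symmetric invertible matrix with inverse $(g^{\mu\nu})$, and let $\mathcal{A}^!$ be the unital associative $\mathbb{C}$-algebra generated by $\theta^0,\dots,\theta^s$ with relations \[ \theta^\lambda\theta^\mu\theta^\nu=\frac{1}{s}\left(g^{\lambda\mu}\theta^\nu+g^{\mu\nu}\theta^\lambda-2g^{\lambda\nu}\theta^\mu\right)\mathbf{g},\qquad \lambda,\mu,\nu\in\{0,\dots,s\}, \] where $\mathbf{g}=\sum_{\alpha,\beta}g_{\alpha\beta}\theta^\alpha\theta^\beta$, graded by $\deg\theta^\lambda=1$. Then $\mathcal{A}^!_0=\mathbb{C}1$, $\mathcal{A}^!_1=\bigoplus_\lambda\mathbb{C}\theta^\lambda$, $\mathcal{A}^!_2=\bigoplus_{\mu,\nu}\mathbb{C}\theta^\mu\theta^\nu$, $\mathcal{A}^!_3=\bigoplus_\lambda\mathbb{C}\theta^\lambda\mathbf{g}$, $\mathcal{A}^!_4=\mathbb{C}\mathbf{g}^2$, and $\mathcal{A}^!_n=0$ for $n\geq5$. In particular $\dim\mathcal{A}^!_0=\dim\mathcal{A}^!_4=1$, $\dim\mathcal{A}^!_1=\dim\mathcal{A}^!_3=s+1$, $\dim\mathcal{A}^!_2=(s+1)^2$.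
   Context: $\mathcal{A}^!$ is the dual 3-homogeneous algebra $T(E^* )/(R^\perp)$ of the cubic Yang–Mills algebra $T(E)/(R)$ (generated by $\nabla_0,\dots,\nabla_s$ with relations $\sum_{\lambda,\mu}g^{\lambda\mu}[\nabla_\lambda,[\nabla_\mu,\nabla_\nu]]=0$), where $(\theta^\lambda)$ is the dual basis of $(\nabla_\lambda)$ and $R^\perp\subset E^{*\otimes3}$ is the annihilator of $R$; the displayed relations are its defining relations. *)

From HB Require Import structures.
From mathcomp Require Import all_boot all_order all_algebra.
From mathcomp Require Import complex.
From mathcomp Require Import reals.

Set Implicit Arguments.
Unset Strict Implicit.
Unset Printing Implicit Defensive.

Import Order.TTheory GRing.Theory Num.Theory.
Local Open Scope ring_scope.

Section CubicDual.
Variable R : realType.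
(* s >= 1 : indices 0..s are the ordinals 'I_s.+1 *)
Variable s : nat.
Local Notation k := s.+1.
Local Notation C := (R[i])%type.
(* g = (g_{mu nu}); the inverse (g^{mu nu}) is invmx g *)
Variable g : 'M[R]_k.

Definition gC (a b : 'I_k) : C := ((g a b)%:C)%C.
Definition ginvC (a b : 'I_k) : C := (((invmx g) a b)%:C)%C.

(* Homogeneous degree-n part of the tensor algebra T(E^* ) over C:
   C-valued functions on words of length n in the letters theta^0..theta^s,
   i.e. the word w is the basis tensor theta^{w_0} ... theta^{w_{n-1}}. *)
Definition Tn (n : nat) := {ffun n.-tuple 'I_k -> C^o}.

Definition letter (n : nat) (w : n.-tuple 'I_k) (j : nat) : 'I_k := nth ord0 w j.

Definition mono (n : nat) (w : n.-tuple 'I_k) : Tn n :=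
  [ffun w' : n.-tuple 'I_k => ((w' == w)%:R : C)].

(* coefficient of the monomial theta^a theta^b theta^c in the defining relation
   theta^l theta^m theta^nu
     - 1/s (g^{lm} theta^nu + g^{m nu} theta^l - 2 g^{l nu} theta^m) gg,
   where gg = sum_{al,be} g_{al be} theta^al theta^be. *)
Definition relcoef (l m nu a b c : 'I_k) : C :=
  ((a == l) && (b == m) && (c == nu))%:R
  - (s%:R)^-1 * (ginvC l m * (a == nu)%:R + ginvC m nu * (a == l)%:R
                 - 2%:R * ginvC l nu * (a == m)%:R) * gC b c.

(* The element  e_u (x) r_{l m nu} (x) e_v  of T_n, where the relation sits in
   positions i, i+1, i+2 and u = take i w0, v = drop (i+3) w0. *)
Definition relgen (n : nat) (i : nat) (w0 : n.-tuple 'I_k) (l m nu : 'I_k) : Tn n :=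
  [ffun w : n.-tuple 'I_k => if (take i w == take i w0) && (drop (i + 3) w == drop (i + 3) w0)
             then relcoef l m nu (letter w i) (letter w i.+1) (letter w i.+2)
             else 0].

(* degree-n part of the two-sided ideal (R^perp) generated by the
   (homogeneous, cubic) relations: I_n = sum_{i+3+j=n} E^{i} R^perp E^{j} *)
Definition idealn (n : nat) : {vspace Tn n} :=
  \big[addv/0%VS]_(i < n | (i + 3 <= n)%N) \big[addv/0%VS]_(w0 : n.-tuple 'I_k)
     \big[addv/0%VS]_(l : 'I_k) \big[addv/0%VS]_(m : 'I_k) \big[addv/0%VS]_(nu : 'I_k)
        <[relgen i w0 l m nu]>%VS.

(* dim A^!_n = dim (T_n / I_n) *)
Definition dimA (n : nat) : nat := (\dim (fullv : {vspace Tn n}) - \dim (idealn n))%N.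

(* The classes modulo I_n of the family f form a basis of A^!_n = T_n / I_n. *)
Definition basis_mod (n : nat) (I : finType) (f : I -> Tn n) : Prop :=
  addv (\big[addv/0%VS]_(j : I) <[f j]>%VS) (idealn n) = fullv /\
  (forall c : I -> C, \sum_(j : I) c j *: f j \in idealn n -> forall j, c j = 0).

Definition zero_mod (n : nat) : Prop := idealn n = fullv.

Definition unit0 : Tn 0 := mono [tuple].
Definition theta (l : 'I_k) : Tn 1 := mono [tuple l].
Definition theta2 (p : 'I_k * 'I_k) : Tn 2 := mono [tuple p.1; p.2].
Definition theta_gg (l : 'I_k) : Tn 3 :=
  [ffun w : 3.-tuple 'I_k => ((letter w 0 == l)%:R : C) * gC (letter w 1) (letter w 2)].
Definition gg2 : Tn 4 :=
  [ffun w : 4.-tuple 'I_k => gC (letter w 0) (letter w 1) * gC (letter w 2) (letter w 3)].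

End CubicDual.

(* No relation has degree below 3. In degree 3 the relations express each
   θ^l θ^m θ^ν through the θ^λ gg, and the linear forms
     φ_r(θ^a θ^b θ^c) = g^{ab} δ^c_r - 2 g^{ac} δ^b_r + g^{bc} δ^a_r
   vanish on the relations while φ_r(θ^λ gg) = s δ^λ_r, so the θ^λ gg are a
   basis modulo the ideal.
   In degree 4, contracting the relations with g_{μν} shows that gg commutes
   with every θ^a and that θ^a θ^b gg and θ^a gg θ^b are both congruent to
   g^{ab}/(s+1) gg^2, so every monomial is a multiple of gg^2. The form
     Φ(θ^a θ^b θ^c θ^d) = g^{ab} g^{cd} - 2 g^{ac} g^{bd} + g^{ad} g^{bc}
   is Σ_r g^{ar} φ_r on its last three letters and Σ_r g^{rd} φ_r on its first
   three, hence vanishes on the ideal, while Φ(gg^2) = s(s+1) ≠ 0.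
   In degree 5, θ^a gg^2 ≡ (s+1)^-1 gg^2 θ^a ≡ (s+1)^-2 θ^a gg^2, so θ^a gg^2
   lies in the ideal and with it every monomial; higher degrees follow by
   multiplying on the left. *)

From HB Require Import structures.
From mathcomp Require Import all_boot all_order all_algebra.
From mathcomp Require Import complex.
From mathcomp Require Import reals.
From mathcomp Require Import zify ring.

Set Implicit Arguments.
Unset Strict Implicit.
Unset Printing Implicit Defensive.

Import Order.TTheory GRing.Theory Num.Theory.
Local Open Scope ring_scope.

Lemma memv_sumv_sup (K : fieldType) (vT : vectType K) (J : finType) (P : pred J)
    (Vs : J -> {vspace vT}) j x :
  P j -> x \in Vs j -> x \in (\sum_(i | P i) Vs i)%VS.
Proof. by move=> Pj; apply/subvP; apply: sumv_sup Pj (subvv _). Qed.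

Section IndexSums.
Variables (K : comRingType) (J : finType).

Lemma sum_delta_l (F : J -> K) a : \sum_b (b == a)%:R * F b = F a.
Proof.
by rewrite (bigD1 a) //= eqxx mul1r big1 ?addr0 // => b /negbTE->; rewrite mul0r.
Qed.

Lemma sum_delta_r (F : J -> K) a : \sum_b F b * (b == a)%:R = F a.
Proof. by under eq_bigr do rewrite mulrC; rewrite sum_delta_l. Qed.

Lemma sum_delta_lC (F : J -> K) a : \sum_b (a == b)%:R * F b = F a.
Proof. by under eq_bigr do rewrite eq_sym; rewrite sum_delta_l. Qed.

Lemma sum_delta_rC (F : J -> K) a : \sum_b F b * (a == b)%:R = F a.
Proof. by under eq_bigr do rewrite eq_sym; rewrite sum_delta_r. Qed.

Lemma sumrBD2 (F G H : J -> K) :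
  \sum_j (F j - 2%:R * G j + H j) = \sum_j F j - 2%:R * \sum_j G j + \sum_j H j.
Proof. by rewrite big_split sumrB mulr_sumr. Qed.

Lemma sumr_comb3 (P Q1 Q2 Q3 : J -> K) (x : K) :
  \sum_j (P j - x * (Q1 j + Q2 j - 2%:R * Q3 j)) =
  \sum_j P j - x * (\sum_j Q1 j + \sum_j Q2 j - 2%:R * \sum_j Q3 j).
Proof. by rewrite [2%:R * _]mulr_sumr -big_split -sumrB mulr_sumr -sumrB. Qed.

End IndexSums.

Lemma scale_comb3_split (aT : finType) (K : comRingType)
    (M X1 X2 X3 G : {ffun aT -> K^o}) (x1 x2 x3 y1 y2 y3 q : K) :
  M - (q * (x1 * y1 + x2 * y2 - 2%:R * (x3 * y3))) *: G =
  (M - q *: (x1 *: X1 + x2 *: X2 - 2%:R *: (x3 *: X3)))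
  + q *: (x1 *: (X1 - y1 *: G) + x2 *: (X2 - y2 *: G) - 2%:R *: (x3 *: (X3 - y3 *: G))).
Proof. by apply/ffunP => w; rewrite !ffunE /= /GRing.scale /=; ring. Qed.

Section CubicDual.
Variables (R : realType) (s : nat) (g : 'M[R]_s.+1).
Local Notation k := s.+1.
Local Notation C := (R[i])%type.
Local Notation word n := (n.-tuple 'I_k).
Local Notation T n := (Tn R s n).
Local Notation I n := (idealn g n).
Local Notation delta a b := (((a == b)%:R : C)).
Local Notation gc := (gC g).
Local Notation Gc := (ginvC g).

Lemma ffunZ n (c : C) (x : T n) w : (c *: x) w = c * x w.
Proof. by rewrite ffunE. Qed.

Lemma scaleCE (a b : C) : a *: (b : C^o) = a * b.
Proof. by []. Qed.

Lemma natr_k_neq0 : (k%:R : C) != 0.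
Proof. by rewrite pnatr_eq0. Qed.

Lemma tuple_consP n (w : word n.+1) : exists a u, w = cons_tuple a u.
Proof. by exists (thead w), (behead_tuple w); apply: val_inj; case: w => [[]]. Qed.

Lemma tuple3P (w : word 3) : exists a b c, w = [tuple a; b; c].
Proof.
exists (letter w 0), (letter w 1), (letter w 2).
by apply: val_inj; case: w => [[|? [|? [|? []]]]].
Qed.

Lemma tuple4P (w : word 4) : exists a b c d, w = [tuple a; b; c; d].
Proof.
exists (letter w 0), (letter w 1), (letter w 2), (letter w 3).
by apply: val_inj; case: w => [[|? [|? [|? [|? []]]]]].
Qed.

Lemma tuple5P (w : word 5) : exists a b c d e, w = [tuple a; b; c; d; e].
Proof.
exists (letter w 0), (letter w 1), (letter w 2), (letter w 3), (letter w 4).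
by apply: val_inj; case: w => [[|? [|? [|? [|? [|? []]]]]]].
Qed.

(* Written with [letter w 0] rather than [thead w] so that they reduce on
   explicit tuples. *)
Definition wbelast n (w : word n.+1) : word n := belast_tuple (letter w 0) (behead_tuple w).
Definition wlast n (w : word n.+1) : 'I_k := last (letter w 0) (behead w).

Lemma rcons_wbelast n (w : word n.+1) : rcons_tuple (wbelast w) (wlast w) = w.
Proof. by apply: val_inj; rewrite /= -lastI; case: w => [[]]. Qed.

Lemma wbelast_rcons n (u : word n) a :
  wbelast (rcons_tuple u a) = u /\ wlast (rcons_tuple u a) = a.
Proof.
have /eqP := rcons_wbelast (rcons_tuple u a); rewrite -val_eqE /= eqseq_rcons.
by case/andP => /eqP uE /eqP; split=> //; apply: val_inj.
Qed.

Lemma big_tuple_cons n (F : word n.+1 -> C) :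
  \sum_w F w = \sum_a \sum_(u : word n) F (cons_tuple a u).
Proof.
rewrite pair_big /= (reindex (fun p : 'I_k * word n => cons_tuple p.1 p.2)) //=.
exists (fun w : word n.+1 => (thead w, behead_tuple w)) => [[a u] _|w _] /=.
  by congr (_, _); apply: val_inj.
by apply: val_inj; case: w => [[]].
Qed.

Lemma big_tuple_rcons n (F : word n.+1 -> C) :
  \sum_w F w = \sum_(u : word n) \sum_a F (rcons_tuple u a).
Proof.
rewrite pair_big /= (reindex (fun p : word n * 'I_k => rcons_tuple p.1 p.2)) //=.
exists (fun w : word n.+1 => (wbelast w, wlast w)) => [[u a] _|w _] /=.
  by case: (wbelast_rcons u a) => -> ->.
exact: rcons_wbelast.
Qed.

Lemma big_tuple3 (F : word 3 -> C) :
  \sum_w F w = \sum_a \sum_b \sum_c F [tuple a; b; c].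
Proof.
rewrite big_tuple_cons; apply: eq_bigr => a _; rewrite big_tuple_cons.
apply: eq_bigr => b _; rewrite big_tuple_cons; apply: eq_bigr => c _.
rewrite (big_pred1 [tuple]) => [|t]; first by congr F; apply: val_inj.
by apply/esym/eqP/val_inj; case: t => [[]].
Qed.

Lemma ffun_monoE n (x : T n) : x = \sum_w x w *: mono R w.
Proof.
apply/ffunP => w; rewrite sum_ffunE (bigD1 w) //= big1 ?addr0.
  by rewrite ffunZ ffunE eqxx mulr1.
by move=> w' nw'w; rewrite ffunZ ffunE eq_sym (negbTE nw'w) mulr0.
Qed.

Lemma monos_fullv n (V : {vspace T n}) : (forall w, mono R w \in V) -> V = fullv.
Proof.
move=> monoV; apply/eqP; rewrite eqEsubv subvf; apply/subvP => x _.
by rewrite [x]ffun_monoE; apply: memv_suml => w _; apply: memvZ.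
Qed.

Lemma relgen_in_ideal n (i : 'I_n) w0 l m nu :
  (i + 3 <= n)%N -> relgen g i w0 l m nu \in I n.
Proof.
move=> i3n; apply: (memv_sumv_sup (j := i)) => //.
do 4![apply: memv_sumv_sup => //]; exact: memv_line.
Qed.

Lemma idealn_linear_ind n (vT : vectType C) (f : {linear T n -> vT}) (V : {vspace vT}) :
  (forall (i : 'I_n) w0 l m nu, (i + 3 <= n)%N -> f (relgen g i w0 l m nu) \in V) ->
  forall x, x \in I n -> f x \in V.
Proof.
move=> fgen; pose P (U : {vspace T n}) := forall x, x \in U -> f x \in V.
have P0 : P 0%VS by move=> x /[!memv0] /eqP ->; rewrite linear0 mem0v.
have PD U W : P U -> P W -> P (U + W)%VS.
  by move=> PU PW _ /memv_addP[y /PU fy [z /PW fz ->]]; rewrite linearD memvD.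
apply: (big_ind P) => // i i3n; do 4![apply: (big_ind P) => // ? _].
by move=> x /vlineP[c ->]; rewrite linearZ memvZ // fgen.
Qed.

Lemma basis_mod_dimA n (J : finType) (f : J -> T n) : basis_mod g f -> dimA g n = #|J|.
Proof.
move=> [span_f free_f]; set U := (\sum_(j : J) <[f j]>)%VS.
have lineP (us : J -> T n) : (forall j, us j \in <[f j]>%VS) ->
    exists c : J -> C, forall j, us j = c j *: f j.
  move=> usf; have /fin_all_exists[c usE] : forall j, exists c : C, us j = c *: f j.
    by move=> j; apply/vlineP.
  by exists c.
have f_neq0 j : f j != 0.
  apply/eqP => fj0; have /free_f/(_ j)/eqP : \sum_i delta i j *: f i \in I n.
    rewrite (bigD1 j) //= big1 => [|i /negbTE->]; last by rewrite scale0r.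
    by rewrite fj0 scaler0 addr0 mem0v.
  by rewrite eqxx oner_eq0.
have dimU : \dim U = #|J|.
  have /directvP -> : directv U.
    apply/directv_sum_independent => us usf us0 j _.
    have [c usE] := lineP _ (usf^~ isT).
    by rewrite usE free_f ?scale0r // -(eq_bigr _ (fun j _ => usE j)) us0 mem0v.
  by rewrite /= -sum1_card; apply: eq_bigr => j _; rewrite dim_vline f_neq0.
have capU0 : (U :&: I n = 0)%VS.
  apply/eqP; rewrite -subv0; apply/subvP => x /memv_capP[/memv_sumP[us usf ->] xI].
  have [c usE] := lineP _ (usf^~ isT).
  rewrite (eq_bigr _ (fun j _ => usE j)) in xI *.
  by rewrite big1 ?mem0v // => j _; rewrite free_f ?scale0r.
rewrite /dimA -span_f; have := dimv_sum_cap U (I n).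
by rewrite capU0 dimv0 addn0 => ->; rewrite dimU addnK.
Qed.

Lemma idealn_small n : (n <= 2)%N -> I n = 0%VS.
Proof. by move=> n_le2; rewrite /idealn big1 // => i i3n; lia. Qed.

Lemma basis_mod_monos n (J : finType) (phi : J -> word n) :
  (n <= 2)%N -> bijective phi -> basis_mod g (fun j => mono R (phi j)).
Proof.
move=> n_le2 [psi phiK psiK]; rewrite /basis_mod (idealn_small n_le2) addv0; split.
  apply: monos_fullv => w; rewrite -[w]psiK.
  by apply: (memv_sumv_sup (j := psi w)) => //; apply: memv_line.
move=> c /[!memv0] /eqP/ffunP c0 j; have := c0 (phi j).
rewrite sum_ffunE ffunE (bigD1 j) //= big1 => [|i nij]; rewrite ffunZ ffunE.
  by rewrite eqxx mulr1 addr0.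
by rewrite (inj_eq (can_inj phiK)) eq_sym (negbTE nij) mulr0.
Qed.

Lemma basis_mod_unit0 : basis_mod g (fun _ : unit => unit0 R s).
Proof.
apply: (basis_mod_monos (phi := fun _ => [tuple])) => //.
by exists (fun _ => tt) => [[]|w] //; rewrite [w]tuple0.
Qed.

Lemma basis_mod_theta : basis_mod g (theta R (s:=s)).
Proof.
apply: (basis_mod_monos (phi := fun l : 'I_k => [tuple l])) => //.
exists (fun w : word 1 => letter w 0) => [l|w] //.
by apply: val_inj; case: w => [[|? []]].
Qed.

Lemma basis_mod_theta2 : basis_mod g (theta2 R (s:=s)).
Proof.
apply: (basis_mod_monos (phi := fun p : 'I_k * 'I_k => [tuple p.1; p.2])) => //.
exists (fun w : word 2 => (letter w 0, letter w 1)) => [[a b]|w] //.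
by apply: val_inj; case: w => [[|? [|? []]]].
Qed.

(* [lmul a x] and [rmul a x] are the products θ^a x and x θ^a. *)
Definition lmul n (a : 'I_k) (x : T n) : T n.+1 :=
  [ffun w : word n.+1 => delta (letter w 0) a * x (behead_tuple w)].

Definition rmul n (a : 'I_k) (x : T n) : T n.+1 :=
  [ffun w : word n.+1 => x (wbelast w) * delta (wlast w) a].

Fact lmul_is_linear n a : linear (@lmul n a).
Proof. by move=> c x y; apply/ffunP => w; rewrite !ffunE mulrDr scalerAr. Qed.
HB.instance Definition _ n a :=
  GRing.isLinear.Build C (T n) (T n.+1) *:%R (@lmul n a) (lmul_is_linear a).

Fact rmul_is_linear n a : linear (@rmul n a).
Proof. by move=> c x y; apply/ffunP => w; rewrite !ffunE mulrDl scalerAl. Qed.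
HB.instance Definition _ n a :=
  GRing.isLinear.Build C (T n) (T n.+1) *:%R (@rmul n a) (rmul_is_linear a).

Lemma lmul_cons n a b (x : T n) u : lmul a x (cons_tuple b u) = delta b a * x u.
Proof. by rewrite ffunE; congr (_ * x _); apply: val_inj. Qed.

Lemma rmul_rcons n a b (x : T n) u : rmul a x (rcons_tuple u b) = x u * delta b a.
Proof. by rewrite ffunE; case: (wbelast_rcons u b) => -> ->. Qed.

Lemma lmul_mono n a (u : word n) : lmul a (mono R u) = mono R (cons_tuple a u).
Proof.
apply/ffunP => w; have [b [v ->]] := tuple_consP w.
by rewrite lmul_cons !ffunE -!val_eqE /= eqseq_cons -mulnb natrM.
Qed.

Lemma lmul_relgen n a i (w0 : word n) l m nu :
  lmul a (relgen g i w0 l m nu) = relgen g i.+1 (cons_tuple a w0) l m nu.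
Proof.
apply/ffunP => w; have [b [u ->]] := tuple_consP w.
rewrite lmul_cons !ffunE /letter /= eqseq_cons -andbA.
by case: (b == a); case: ifP; rewrite ?mul1r ?mul0r.
Qed.

Lemma rmul_relgen n a i (w0 : word n) l m nu : (i + 3 <= n)%N ->
  rmul a (relgen g i w0 l m nu) = relgen g i (rcons_tuple w0 a) l m nu.
Proof.
move=> i3n; apply/ffunP => w; rewrite -[w]rcons_wbelast.
move: (wbelast w) (wlast w) => u b; rewrite rmul_rcons !ffunE /=.
have take_rcons (v : word n) e : take i (rcons v e) = take i v.
  by rewrite -cats1 takel_cat // size_tuple; lia.
have [i0 i1 i2] : [/\ i < n, i.+1 < n & i.+2 < n]%N by split; lia.
rewrite !take_rcons !drop_rcons ?size_tuple; try lia.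
rewrite eqseq_rcons /letter !nth_rcons size_tuple i0 i1 i2 andbA.
by case: (b == a); rewrite ?andbT ?andbF ?mulr1 ?mulr0 //; case: ifP.
Qed.

Lemma lmul_idealn n a (x : T n) : x \in I n -> lmul a x \in I n.+1.
Proof.
apply: (idealn_linear_ind (f := lmul a)) => i w0 l m nu i3n; rewrite /= lmul_relgen.
have i1n : (i.+1 < n.+1)%N by rewrite ltnS.
by apply: (relgen_in_ideal (i := Ordinal i1n)) => /=; lia.
Qed.

Lemma rmul_idealn n a (x : T n) : x \in I n -> rmul a x \in I n.+1.
Proof.
apply: (idealn_linear_ind (f := rmul a)) => i w0 l m nu i3n.
rewrite /= rmul_relgen //; have in1 : (i < n.+1)%N by apply: leqW.
by apply: (relgen_in_ideal (i := Ordinal in1)) => /=; lia.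
Qed.

Definition pairing n (F : word n -> C) (x : T n) : C^o := \sum_w F w * x w.

Fact pairing_is_linear n F : linear (@pairing n F).
Proof.
move=> c x y; rewrite /pairing scaler_sumr -big_split; apply: eq_bigr => w _ /=.
by rewrite !ffunE mulrDr scalerAr.
Qed.
HB.instance Definition _ n F :=
  GRing.isLinear.Build C (T n) C^o *:%R (@pairing n F) (pairing_is_linear F).

Lemma pairing_mono n F (u : word n) : pairing F (mono R u) = F u.
Proof.
rewrite /pairing (bigD1 u) //= big1 => [|w /negbTE nwu]; rewrite ffunE.
  by rewrite eqxx mulr1 addr0.
by rewrite nwu mulr0.
Qed.

Lemma pairing_lmul n F a (x : T n) :
  pairing F (lmul a x) = pairing (fun u => F (cons_tuple a u)) x.
Proof.
rewrite /pairing big_tuple_cons.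
rewrite -(sum_delta_l (fun b => \sum_u F (cons_tuple b u) * x u) a).
apply: eq_bigr => b _; rewrite mulr_sumr.
by apply: eq_bigr => u _; rewrite lmul_cons mulrCA.
Qed.

Lemma pairing_rmul n F a (x : T n) :
  pairing F (rmul a x) = pairing (fun u => F (rcons_tuple u a)) x.
Proof.
rewrite /pairing big_tuple_rcons; apply: eq_bigr => u _.
rewrite -(sum_delta_l (fun b => F (rcons_tuple u b) * x u) a).
by apply: eq_bigr => b _; rewrite rmul_rcons [RHS]mulrC -mulrA.
Qed.

Lemma pairing_lincomb n (F : word n -> C) (c : 'I_k -> C) (Fr : 'I_k -> word n -> C) x :
  (forall u, F u = \sum_r c r * Fr r u) -> pairing F x = \sum_r c r * pairing (Fr r) x.
Proof.
move=> FE; rewrite /pairing; under eq_bigr => u _ do rewrite FE mulr_suml.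
rewrite exchange_big; apply: eq_bigr => r _; rewrite mulr_sumr.
by apply: eq_bigr => u _; rewrite mulrA.
Qed.

Lemma pairing_idealn_eq0 n F (x : T n) :
  (forall (i : 'I_n) w0 l m nu, (i + 3 <= n)%N -> pairing F (relgen g i w0 l m nu) = 0) ->
  x \in I n -> pairing F x = 0.
Proof.
move=> Fgen xI; apply/eqP; rewrite -memv0.
apply: (idealn_linear_ind (f := pairing F)) xI => i w0 l m nu i3n.
by rewrite /= Fgen ?mem0v.
Qed.

Definition rel3 l m nu : T 3 :=
  [ffun w => relcoef g l m nu (letter w 0) (letter w 1) (letter w 2)].

Definition theta_theta_gg a b : T 4 := lmul a (theta_gg g b).
Definition theta_gg_theta a b : T 4 := rmul b (theta_gg g a).

Lemma relgen_rel3 (w0 : word 3) l m nu : relgen g 0 w0 l m nu = rel3 l m nu.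
Proof.
by apply/ffunP => w; rewrite !ffunE !take0 add0n !drop_oversize ?size_tuple.
Qed.

Lemma rel3_in_ideal l m nu : rel3 l m nu \in I 3.
Proof.
rewrite -(relgen_rel3 [tuple l; m; nu]).
exact: (relgen_in_ideal (i := @Ordinal 3 0 isT)).
Qed.

Lemma relgen4_cases (i : 'I_4) w0 l m nu : (i + 3 <= 4)%N ->
  relgen g i w0 l m nu = rmul (wlast w0) (rel3 l m nu) \/
  relgen g i w0 l m nu = lmul (letter w0 0) (rel3 l m nu).
Proof.
case: i => [[|[|i]] /= _] i3n; try lia.
  left; rewrite -[w0]rcons_wbelast -rmul_relgen // relgen_rel3.
  by case: (wbelast_rcons (wbelast w0) (wlast w0)) => _ ->.
by right; have [a [u ->]] := tuple_consP w0; rewrite -lmul_relgen relgen_rel3.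
Qed.

Lemma rel3E l m nu : rel3 l m nu =
  mono R [tuple l; m; nu] - (s%:R)^-1 *: (Gc l m *: theta_gg g nu
    + Gc m nu *: theta_gg g l - 2%:R *: (Gc l nu *: theta_gg g m)).
Proof.
apply/ffunP => w; have [a [b [c ->]]] := tuple3P w.
rewrite !ffunE !scaleCE /letter /= -val_eqE /= !eqseq_cons andbT.
by rewrite /relcoef -!mulnb !natrM; ring.
Qed.

Lemma rmul_rel3E l m nu rho : rmul rho (rel3 l m nu) = mono R [tuple l; m; nu; rho]
  - (s%:R)^-1 *: (Gc l m *: theta_gg_theta nu rho + Gc m nu *: theta_gg_theta l rho
    - 2%:R *: (Gc l nu *: theta_gg_theta m rho)).
Proof.
apply/ffunP => w; have [a [b [c [d ->]]]] := tuple4P w.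
rewrite !ffunE !scaleCE /wbelast /wlast /letter /= -val_eqE /= ?eqseq_cons ?andbT.
by rewrite /relcoef -!mulnb !natrM ?mulr1; ring.
Qed.

Lemma pairing_rel3 (F : word 3 -> C) l m nu : pairing F (rel3 l m nu) =
  F [tuple l; m; nu] - (s%:R)^-1 * (Gc l m * pairing F (theta_gg g nu)
    + Gc m nu * pairing F (theta_gg g l) - 2%:R * (Gc l nu * pairing F (theta_gg g m))).
Proof. by rewrite rel3E linearB linearZ linearB linearD !linearZ /= pairing_mono. Qed.

Lemma pairing_theta_gg (F : word 3 -> C) j :
  pairing F (theta_gg g j) = \sum_b \sum_c gc b c * F [tuple j; b; c].
Proof.
rewrite /pairing big_tuple3.
under eq_bigr => a _ do under eq_bigr => b _ do under eq_bigr => c _ do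
  rewrite ffunE /letter /= mulrCA (mulrC (F _)).
under eq_bigr => a _ do under eq_bigr => b _ do rewrite -mulr_sumr.
by under eq_bigr => a _ do rewrite -mulr_sumr; rewrite sum_delta_l.
Qed.

Section Metric.
Hypotheses (s_gt0 : (0 < s)%N) (g_sym : g^T = g) (g_unit : g \in unitmx).

Lemma natr_s_neq0 : (s%:R : C) != 0.
Proof. by rewrite pnatr_eq0 -lt0n. Qed.

Lemma gC_sym a b : gc a b = gc b a.
Proof. by rewrite /gC -{1}g_sym mxE. Qed.

Lemma ginvC_sym a b : Gc a b = Gc b a.
Proof. by rewrite /ginvC -{1}g_sym -trmx_inv mxE. Qed.

Lemma gC_ginvC a c : \sum_b gc a b * Gc b c = delta a c.
Proof.
have := congr1 (fun M : 'M[R]_k => M a c) (mulmxV g_unit); rewrite !mxE => gGac.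
rewrite /gC /ginvC; under eq_bigr do rewrite -rmorphM.
by rewrite -rmorph_sum gGac rmorph_nat.
Qed.

Lemma ginvC_gC a c : \sum_b Gc a b * gc b c = delta a c.
Proof. by under eq_bigr do rewrite mulrC gC_sym ginvC_sym; rewrite gC_ginvC eq_sym. Qed.

Lemma gCT_ginvC a c : \sum_b gc b a * Gc b c = delta a c.
Proof. by under eq_bigr do rewrite gC_sym; rewrite gC_ginvC. Qed.

Lemma trace_gC_ginvC : \sum_a \sum_b gc a b * Gc a b = k%:R.
Proof.
under eq_bigr => a _ do under eq_bigr => b _ do rewrite (ginvC_sym a b).
by under eq_bigr => a _ do rewrite gC_ginvC eqxx; rewrite sumr_const card_ord.
Qed.

(** * Degree three *)

Definition phi3 r (w : word 3) : C :=
  Gc (letter w 0) (letter w 1) * delta (letter w 2) r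
  - 2%:R * (Gc (letter w 0) (letter w 2) * delta (letter w 1) r)
  + Gc (letter w 1) (letter w 2) * delta (letter w 0) r.

Lemma pairing_phi3_theta_gg r j : pairing (phi3 r) (theta_gg g j) = s%:R * delta j r.
Proof.
rewrite pairing_theta_gg /phi3 /letter /=.
have splitE b c : gc b c * (Gc j b * delta c r - 2%:R * (Gc j c * delta b r)
    + Gc b c * delta j r) = Gc j b * (gc b c * delta c r)
    - 2%:R * (delta b r * (gc b c * Gc c j)) + delta j r * (gc b c * Gc b c).
  by rewrite (ginvC_sym j c); ring.
under eq_bigr => b _ do rewrite (eq_bigr _ (fun c _ => splitE b c)) sumrBD2 -!mulr_sumr.
under eq_bigr => b _ do rewrite sum_delta_r gC_ginvC.
rewrite sumrBD2 -mulr_sumr trace_gC_ginvC ginvC_gC sum_delta_l eq_sym -natr1; ring.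
Qed.

Lemma pairing_phi3_rel3 r l m nu : pairing (phi3 r) (rel3 l m nu) = 0.
Proof.
rewrite pairing_rel3 !pairing_phi3_theta_gg /phi3 /letter /=.
by field; apply: natr_s_neq0.
Qed.

Lemma pairing_phi3_idealn r x : x \in I 3 -> pairing (phi3 r) x = 0.
Proof.
apply: pairing_idealn_eq0 => i w0 l m nu i3n.
have -> : (i : nat) = 0%N by lia.
by rewrite relgen_rel3 pairing_phi3_rel3.
Qed.

Lemma basis_mod_theta_gg : basis_mod g (theta_gg g).
Proof.
have thetaU j : theta_gg g j \in (\sum_i <[theta_gg g i]>)%VS.
  by apply: (memv_sumv_sup (j := j)) => //; apply: memv_line.
split.
  apply: monos_fullv => w; have [a [b [c ->]]] := tuple3P w.
  have -> : mono R [tuple a; b; c] = (s%:R)^-1 *: (Gc a b *: theta_gg g c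
      + Gc b c *: theta_gg g a - 2%:R *: (Gc a c *: theta_gg g b)) + rel3 a b c.
    by rewrite rel3E addrC subrK.
  apply: memv_add; last exact: rel3_in_ideal.
  by rewrite !(rpredZ, rpredB, rpredD, thetaU).
move=> c /pairing_phi3_idealn phi3c r; have /eqP := phi3c r.
rewrite linear_sum.
under eq_bigr => j _ do rewrite linearZ /= pairing_phi3_theta_gg scaleCE mulrCA.
by rewrite -mulr_sumr sum_delta_r mulf_eq0 (negbTE natr_s_neq0) => /eqP.
Qed.

(** * Degree four *)

Lemma sum_gC_relcoef12 nu a b c : \sum_l \sum_m gc l m * relcoef g l m nu a b c =
  gc a b * delta c nu - delta a nu * gc b c.
Proof.
have splitE l m : gc l m * relcoef g l m nu a b c =
  gc l m * (delta a l * delta b m * delta c nu) - ((s%:R)^-1 * gc b c) *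
   (gc l m * Gc l m * delta a nu + gc l m * Gc m nu * delta a l
    - 2%:R * (gc l m * Gc l nu * delta a m)).
  by rewrite /relcoef -!mulnb !natrM; ring.
under eq_bigr => l _ do rewrite (eq_bigr _ (fun m _ => splitE l m)) sumr_comb3.
rewrite sumr_comb3.
have delta_sum : \sum_l \sum_m gc l m * (delta a l * delta b m * delta c nu) =
    gc a b * delta c nu.
  transitivity (\sum_l delta a l * \sum_m delta b m * (gc l m * delta c nu)).
    by apply: eq_bigr => l _; rewrite mulr_sumr; apply: eq_bigr => m _; ring.
  by under eq_bigr => l _ do rewrite sum_delta_lC; rewrite sum_delta_lC.
have trace_sum : \sum_l \sum_m gc l m * Gc l m * delta a nu = k%:R * delta a nu.
  by under eq_bigr => l _ do rewrite -mulr_suml; rewrite -mulr_suml trace_gC_ginvC.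
have inv_sum_r : \sum_l \sum_m gc l m * Gc m nu * delta a l = delta a nu.
  transitivity (\sum_l delta a l * \sum_m gc l m * Gc m nu).
    by apply: eq_bigr => l _; rewrite mulr_sumr; apply: eq_bigr => m _; ring.
  by under eq_bigr => l _ do rewrite gC_ginvC; rewrite sum_delta_lC.
have inv_sum_l : \sum_l \sum_m gc l m * Gc l nu * delta a m = delta a nu.
  rewrite exchange_big /=; transitivity (\sum_m delta a m * \sum_l gc l m * Gc l nu).
    by apply: eq_bigr => m _; rewrite mulr_sumr; apply: eq_bigr => l _; ring.
  by under eq_bigr => m _ do rewrite gCT_ginvC; rewrite sum_delta_lC.
rewrite delta_sum trace_sum inv_sum_r inv_sum_l -natr1.
by field; apply: natr_s_neq0.
Qed.

Lemma sum_gC_relcoef13 m a b c : \sum_l \sum_nu gc l nu * relcoef g l m nu a b c =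
  gc a c * delta b m + 2%:R * delta a m * gc b c.
Proof.
have splitE l nu : gc l nu * relcoef g l m nu a b c =
  gc l nu * (delta a l * delta b m * delta c nu) - ((s%:R)^-1 * gc b c) *
   (gc l nu * Gc l m * delta a nu + gc l nu * Gc m nu * delta a l
    - 2%:R * (gc l nu * Gc l nu * delta a m)).
  by rewrite /relcoef -!mulnb !natrM; ring.
under eq_bigr => l _ do rewrite (eq_bigr _ (fun nu _ => splitE l nu)) sumr_comb3.
rewrite sumr_comb3.
have delta_sum : \sum_l \sum_nu gc l nu * (delta a l * delta b m * delta c nu) =
    gc a c * delta b m.
  transitivity (\sum_l delta a l * \sum_nu delta c nu * (gc l nu * delta b m)).
    by apply: eq_bigr => l _; rewrite mulr_sumr; apply: eq_bigr => nu _; ring.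
  by under eq_bigr => l _ do rewrite sum_delta_lC; rewrite sum_delta_lC.
have inv_sum_l : \sum_l \sum_nu gc l nu * Gc l m * delta a nu = delta a m.
  rewrite exchange_big /=; transitivity (\sum_nu delta a nu * \sum_l gc l nu * Gc l m).
    by apply: eq_bigr => nu _; rewrite mulr_sumr; apply: eq_bigr => l _; ring.
  by under eq_bigr => nu _ do rewrite gCT_ginvC; rewrite sum_delta_lC.
have inv_sum_r : \sum_l \sum_nu gc l nu * Gc m nu * delta a l = delta a m.
  transitivity (\sum_l delta a l * \sum_nu gc l nu * Gc nu m).
    apply: eq_bigr => l _; rewrite mulr_sumr; apply: eq_bigr => nu _.
    by rewrite (ginvC_sym m); ring.
  by under eq_bigr => l _ do rewrite gC_ginvC; rewrite sum_delta_lC.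
have trace_sum : \sum_l \sum_nu gc l nu * Gc l nu * delta a m = k%:R * delta a m.
  by under eq_bigr => l _ do rewrite -mulr_suml; rewrite -mulr_suml trace_gC_ginvC.
rewrite delta_sum inv_sum_l inv_sum_r trace_sum -natr1.
by field; apply: natr_s_neq0.
Qed.

Lemma sum_gC_relcoef2 m rho a b c d : \sum_nu gc a nu * relcoef g m nu rho b c d =
  gc a c * delta b m * delta d rho - (s%:R)^-1 *
    (delta a m * delta b rho + delta a rho * delta b m - 2%:R * (Gc m rho * gc a b)) * gc c d.
Proof.
have splitE nu : gc a nu * relcoef g m nu rho b c d =
  gc a nu * delta c nu * (delta b m * delta d rho) - ((s%:R)^-1 * gc c d) *
   (gc a nu * Gc nu m * delta b rho + gc a nu * Gc nu rho * delta b m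
     - 2%:R * (Gc m rho * (gc a nu * delta b nu))).
  by rewrite /relcoef -!mulnb !natrM (ginvC_sym m nu); ring.
rewrite (eq_bigr _ (fun nu _ => splitE nu)) sumr_comb3 -!mulr_suml !gC_ginvC -mulr_sumr.
by rewrite !sum_delta_rC; ring.
Qed.

Lemma gg_commute4 e nu : theta_gg_theta e nu - theta_theta_gg e nu \in I 4.
Proof.
have -> : theta_gg_theta e nu - theta_theta_gg e nu =
    \sum_l \sum_m gc l m *: lmul e (rel3 l m nu).
  apply/ffunP => w; have [a [b [c [d ->]]]] := tuple4P w.
  rewrite sum_ffunE; under eq_bigr => l _ do rewrite sum_ffunE.
  under eq_bigr => l _ do under eq_bigr => m _ do rewrite ffunZ !ffunE /letter /= mulrCA.
  under eq_bigr => l _ do rewrite -mulr_sumr.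
  by rewrite -mulr_sumr sum_gC_relcoef12 !ffunE /letter /=; ring.
apply: rpred_sum => l _; apply: rpred_sum => m _.
exact/rpredZ/lmul_idealn/rel3_in_ideal.
Qed.

(* The difference of the two reductions of θ^l θ^m θ^ν θ^ρ (through its first
   and through its last three letters), contracted with g_{lν}. *)
Lemma contracted_relations4 m rho :
  2%:R *: theta_gg_theta m rho + (s%:R)^-1 *: (theta_theta_gg m rho
    + theta_theta_gg rho m - (2%:R * Gc m rho) *: gg2 g) \in I 4.
Proof.
have -> : 2%:R *: theta_gg_theta m rho + (s%:R)^-1 *: (theta_theta_gg m rho
    + theta_theta_gg rho m - (2%:R * Gc m rho) *: gg2 g) =
    \sum_l \sum_nu gc l nu *: (rmul rho (rel3 l m nu) - lmul l (rel3 m nu rho)).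
  apply/ffunP => w; have [a [b [c [d ->]]]] := tuple4P w.
  rewrite sum_ffunE; under eq_bigr => l _ do rewrite sum_ffunE.
  under eq_bigr => l _ do under eq_bigr => nu _ do
    rewrite ffunZ !ffunE /letter /= mulrBr.
  under eq_bigr => l _ do rewrite sumrB.
  rewrite sumrB.
  transitivity (delta d rho * (\sum_l \sum_nu gc l nu * relcoef g l m nu a b c)
      - \sum_l delta a l * (\sum_nu gc l nu * relcoef g m nu rho b c d)).
    rewrite sum_gC_relcoef13 sum_delta_lC sum_gC_relcoef2.
    by rewrite !ffunE !scaleCE /letter /=; ring.
  congr (_ - _); last first.
    by apply: eq_bigr => l _; rewrite mulr_sumr; apply: eq_bigr => nu _; ring.
  rewrite mulr_sumr; apply: eq_bigr => l _; rewrite mulr_sumr.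
  by apply: eq_bigr => nu _; ring.
apply: rpred_sum => l _; apply: rpred_sum => nu _; apply/rpredZ/rpredB.
  exact/rmul_idealn/rel3_in_ideal.
exact/lmul_idealn/rel3_in_ideal.
Qed.

Lemma theta_theta_gg_relation m rho : (2%:R * s%:R + 1) *: theta_theta_gg m rho
  + theta_theta_gg rho m - (2%:R * Gc m rho) *: gg2 g \in I 4.
Proof.
have -> : (2%:R * s%:R + 1) *: theta_theta_gg m rho + theta_theta_gg rho m
    - (2%:R * Gc m rho) *: gg2 g = s%:R *: ((2%:R *: theta_gg_theta m rho
    + (s%:R)^-1 *: (theta_theta_gg m rho + theta_theta_gg rho m
    - (2%:R * Gc m rho) *: gg2 g)) - 2%:R *: (theta_gg_theta m rho - theta_theta_gg m rho)).
  move: (theta_theta_gg m rho) (theta_theta_gg rho m) (theta_gg_theta m rho) (gg2 g).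
  move=> A B D E; apply/ffunP => w; rewrite !ffunE !scaleCE.
  by field; apply: natr_s_neq0.
apply/rpredZ/rpredB; first exact: contracted_relations4.
exact/rpredZ/gg_commute4.
Qed.

(* Solve the 2×2 system formed by the relations for (m, ρ) and (ρ, m). *)
Lemma theta_theta_gg_congr m rho :
  theta_theta_gg m rho - (Gc m rho / k%:R) *: gg2 g \in I 4.
Proof.
have -> : theta_theta_gg m rho - (Gc m rho / k%:R) *: gg2 g =
  (4%:R * s%:R * k%:R)^-1 *: ((2%:R * s%:R + 1) *:
     ((2%:R * s%:R + 1) *: theta_theta_gg m rho + theta_theta_gg rho m
       - (2%:R * Gc m rho) *: gg2 g)
   - ((2%:R * s%:R + 1) *: theta_theta_gg rho m + theta_theta_gg m rho
       - (2%:R * Gc rho m) *: gg2 g)).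
  rewrite (ginvC_sym rho m); move: (theta_theta_gg m rho) (theta_theta_gg rho m) (gg2 g).
  move=> A B E; apply/ffunP => w; rewrite !ffunE !scaleCE -natr1.
  by field; rewrite natr1 natr_k_neq0 natr_s_neq0.
by apply/rpredZ/rpredB; [apply: rpredZ|]; apply: theta_theta_gg_relation.
Qed.

Lemma theta_gg_theta_congr m rho :
  theta_gg_theta m rho - (Gc m rho / k%:R) *: gg2 g \in I 4.
Proof.
rewrite -(subrK (theta_theta_gg m rho) (theta_gg_theta m rho)) -addrA.
by rewrite rpredD ?gg_commute4 ?theta_theta_gg_congr.
Qed.

Definition gg2_coef l m nu rho : C := (s%:R * k%:R)^-1 *
  (Gc l m * Gc nu rho + Gc m nu * Gc l rho - 2%:R * (Gc l nu * Gc m rho)).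

Lemma mono4_congr l m nu rho :
  mono R [tuple l; m; nu; rho] - gg2_coef l m nu rho *: gg2 g \in I 4.
Proof.
have -> : gg2_coef l m nu rho = (s%:R)^-1 * (Gc l m * (Gc nu rho / k%:R)
    + Gc m nu * (Gc l rho / k%:R) - 2%:R * (Gc l nu * (Gc m rho / k%:R))).
  by rewrite /gg2_coef; field; rewrite nat1r natr_k_neq0 natr_s_neq0.
rewrite (scale_comb3_split (mono R [tuple l; m; nu; rho]) (theta_gg_theta nu rho)
  (theta_gg_theta l rho) (theta_gg_theta m rho) (gg2 g)) -rmul_rel3E.
apply: rpredD; first exact/rmul_idealn/rel3_in_ideal.
apply/rpredZ/rpredB; first apply/rpredD.
all: do 2?apply/rpredZ; exact: theta_gg_theta_congr.
Qed.

Definition phi4 (w : word 4) : C :=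
  Gc (letter w 0) (letter w 1) * Gc (letter w 2) (letter w 3)
  - 2%:R * (Gc (letter w 0) (letter w 2) * Gc (letter w 1) (letter w 3))
  + Gc (letter w 0) (letter w 3) * Gc (letter w 1) (letter w 2).

Lemma phi4_cons a u : phi4 (cons_tuple a u) = \sum_r Gc a r * phi3 r u.
Proof.
have [b [c [d ->]]] := tuple3P u; rewrite /phi4 /phi3 /letter /=.
transitivity (\sum_r (Gc a r * delta d r * Gc b c
    - 2%:R * (Gc a r * delta c r * Gc b d) + Gc a r * delta b r * Gc c d)).
  by rewrite sumrBD2 -!mulr_suml !sum_delta_rC; ring.
by apply: eq_bigr => r _; ring.
Qed.

Lemma phi4_rcons u d : phi4 (rcons_tuple u d) = \sum_r Gc r d * phi3 r u.
Proof.
have [a [b [c ->]]] := tuple3P u; rewrite /phi4 /phi3 /letter /=.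
transitivity (\sum_r (Gc r d * delta c r * Gc a b
    - 2%:R * (Gc r d * delta b r * Gc a c) + Gc r d * delta a r * Gc b c)).
  by rewrite sumrBD2 -!mulr_suml !sum_delta_rC; ring.
by apply: eq_bigr => r _; ring.
Qed.

Lemma pairing_phi4_idealn x : x \in I 4 -> pairing phi4 x = 0.
Proof.
apply: pairing_idealn_eq0 => i w0 l m nu i3n.
case: (relgen4_cases w0 l m nu i3n) => ->.
  rewrite pairing_rmul (pairing_lincomb _ (fun u => phi4_rcons u _)).
  by rewrite big1 // => r _; rewrite pairing_phi3_rel3 mulr0.
rewrite pairing_lmul (pairing_lincomb _ (phi4_cons _)).
by rewrite big1 // => r _; rewrite pairing_phi3_rel3 mulr0.
Qed.

Lemma gg2E : gg2 g = \sum_a \sum_b gc a b *: theta_theta_gg a b.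
Proof.
apply/ffunP => w; have [p [q [r [t ->]]]] := tuple4P w.
rewrite sum_ffunE; under eq_bigr => a _ do rewrite sum_ffunE.
under eq_bigr => a _ do under eq_bigr => b _ do rewrite ffunZ !ffunE /letter /=.
transitivity (\sum_a delta p a * \sum_b delta q b * (gc a b * gc r t)).
  by rewrite !ffunE /letter /= sum_delta_lC sum_delta_lC.
by apply: eq_bigr => a _; rewrite mulr_sumr; apply: eq_bigr => b _; ring.
Qed.

Lemma pairing_phi4_gg2 : pairing phi4 (gg2 g) = s%:R * k%:R.
Proof.
rewrite gg2E linear_sum; under eq_bigr => a _ do rewrite linear_sum.
transitivity (\sum_a \sum_b s%:R * (gc a b * Gc a b)); last first.
  by under eq_bigr => a _ do rewrite -mulr_sumr; rewrite -mulr_sumr trace_gC_ginvC.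
apply: eq_bigr => a _; apply: eq_bigr => b _.
rewrite linearZ /= scaleCE pairing_lmul (pairing_lincomb _ (phi4_cons a)).
under eq_bigr => r _ do rewrite pairing_phi3_theta_gg mulrCA.
by rewrite -mulr_sumr sum_delta_rC mulrCA.
Qed.

Lemma basis_mod_gg2 : basis_mod g (fun _ : unit => gg2 g).
Proof.
split.
  apply: monos_fullv => w; have [a [b [c [d ->]]]] := tuple4P w.
  rewrite -(subrK (gg2_coef a b c d *: gg2 g) (mono R _)) addrC.
  apply: memv_add; last exact: mono4_congr.
  by apply/rpredZ/(memv_sumv_sup (j := tt)) => //; apply: memv_line.
move=> c /pairing_phi4_idealn; rewrite (big_pred1 tt) // linearZ /= pairing_phi4_gg2.
move=> /eqP; rewrite scaleCE !mulf_eq0 (negbTE natr_s_neq0) (negbTE natr_k_neq0) !orbF.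
by move=> /eqP c0 []; rewrite c0.
Qed.

(** * Degree five and higher *)

Lemma lmul_gg2_congr a : lmul a (gg2 g) - (k%:R)^-1 *: rmul a (gg2 g) \in I 5.
Proof.
have -> : lmul a (gg2 g) - (k%:R)^-1 *: rmul a (gg2 g) =
    \sum_d \sum_e gc d e *: rmul e (theta_gg_theta a d - (Gc a d / k%:R) *: gg2 g).
  apply/ffunP => w; have [a' [b [c [d' [f ->]]]]] := tuple5P w.
  rewrite sum_ffunE; under eq_bigr => d _ do rewrite sum_ffunE.
  under eq_bigr => d _ do under eq_bigr => e _ do
    rewrite ffunZ !ffunE !scaleCE /wbelast /wlast /letter /=.
  rewrite !ffunE !scaleCE /wbelast /wlast /letter /=.
  transitivity (\sum_d \sum_e delta f e * (gc d e * (delta a' a * gc b c * delta d' d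
      - Gc a d / k%:R * (gc a' b * gc c d')))); last first.
    by apply: eq_bigr => d _; apply: eq_bigr => e _; ring.
  under eq_bigr => d _ do rewrite sum_delta_lC.
  transitivity (delta a' a * gc b c * \sum_d gc d f * delta d' d
      - (k%:R)^-1 * (gc a' b * gc c d') * \sum_d Gc a d * gc d f).
    by rewrite sum_delta_rC ginvC_gC (eq_sym a f); ring.
  by rewrite !mulr_sumr -sumrB; apply: eq_bigr => d _; ring.
apply: rpred_sum => d _; apply: rpred_sum => e _.
exact/rpredZ/rmul_idealn/theta_gg_theta_congr.
Qed.

Lemma rmul_gg2_congr e : rmul e (gg2 g) - (k%:R)^-1 *: lmul e (gg2 g) \in I 5.
Proof.
have -> : rmul e (gg2 g) - (k%:R)^-1 *: lmul e (gg2 g) =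
    \sum_a \sum_b gc a b *: lmul a (theta_gg_theta b e - (Gc b e / k%:R) *: gg2 g).
  apply/ffunP => w; have [a' [b' [c [d [f ->]]]]] := tuple5P w.
  rewrite sum_ffunE; under eq_bigr => a _ do rewrite sum_ffunE.
  under eq_bigr => a _ do under eq_bigr => b _ do
    rewrite ffunZ !ffunE !scaleCE /wbelast /wlast /letter /=.
  rewrite !ffunE !scaleCE /wbelast /wlast /letter /=.
  transitivity (\sum_a delta a' a * \sum_b gc a b * (delta b' b * gc c d * delta f e
      - Gc b e / k%:R * (gc b' c * gc d f))); last first.
    by apply: eq_bigr => a _; rewrite mulr_sumr; apply: eq_bigr => b _; ring.
  rewrite sum_delta_lC.
  transitivity (gc c d * delta f e * \sum_b gc a' b * delta b' b
      - (k%:R)^-1 * (gc b' c * gc d f) * \sum_b gc a' b * Gc b e).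
    by rewrite sum_delta_rC gC_ginvC; ring.
  by rewrite !mulr_sumr -sumrB; apply: eq_bigr => b _; ring.
apply: rpred_sum => a _; apply: rpred_sum => b _.
exact/rpredZ/lmul_idealn/theta_gg_theta_congr.
Qed.

Lemma lmul_gg2_in_ideal a : lmul a (gg2 g) \in I 5.
Proof.
set x := lmul a (gg2 g); set y := rmul a (gg2 g); set q : C := (k%:R)^-1.
have q2_neq1 : 1 - q * q != 0.
  have : (k%:R * k%:R : C) * (1 - q * q) = (k * k - 1)%N%:R.
    by rewrite natrB ?muln_gt0 // natrM /q; field; rewrite ?nat1r ?natr1 natr_k_neq0.
  by apply: contra_eqN => /eqP->; rewrite mulr0 eq_sym pnatr_eq0; nia.
have -> : x = (1 - q * q)^-1 *: ((x - q *: y) + q *: (y - q *: x)).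
  rewrite scalerBr scalerA addrA subrK -{2}[x]scale1r -scalerBl scalerA.
  by rewrite mulVf // scale1r.
by rewrite rpredZ // rpredD ?rpredZ ?lmul_gg2_congr ?rmul_gg2_congr.
Qed.

Lemma mono5_in_ideal (w : word 5) : mono R w \in I 5.
Proof.
have [a [u ->]] := tuple_consP w; have [b [c [d [e ->]]]] := tuple4P u.
rewrite -lmul_mono -(subrK (gg2_coef b c d e *: gg2 g) (mono R _)) addrC lmul_is_linear.
apply: rpredD; first exact/rpredZ/lmul_gg2_in_ideal.
exact/lmul_idealn/mono4_congr.
Qed.

Lemma zero_mod_ge5 n : (5 <= n)%N -> zero_mod g n.
Proof.
elim: n => [//|n IHn] n_ge5; apply: monos_fullv => w.
have [n_lt5 | n_ge5'] := ltnP n 5.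
  have n4 : n = 4 by lia.
  by subst n; apply: mono5_in_ideal.
have [a [u ->]] := tuple_consP w.
by rewrite -lmul_mono lmul_idealn // (IHn n_ge5') memvf.
Qed.

End Metric.
End CubicDual.

Theorem proposition1 (R : realType) (s : nat) (g : 'M[R]_s.+1) :
  (1 <= s)%N -> g^T = g -> g \in unitmx ->
  [/\ basis_mod g (fun _ : unit => unit0 R s),
      basis_mod g (theta R (s:=s)),
      basis_mod g (theta2 R (s:=s)),
      basis_mod g (theta_gg g)
    & basis_mod g (fun _ : unit => gg2 g)] /\
  (forall n, (5 <= n)%N -> zero_mod g n) /\
  [/\ dimA g 0 = 1%N, dimA g 4 = 1%N, dimA g 1 = s.+1, dimA g 3 = s.+1
    & dimA g 2 = (s.+1 ^ 2)%N].
Proof.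
move=> s_gt0 g_sym g_unit.
have b3 := basis_mod_theta_gg s_gt0 g_sym g_unit.
have b4 := basis_mod_gg2 s_gt0 g_sym g_unit.
split; first by split; [exact: basis_mod_unit0 | exact: basis_mod_theta
  | exact: basis_mod_theta2 | exact: b3 | exact: b4].
split; first exact: zero_mod_ge5.
split.
- by rewrite (basis_mod_dimA (basis_mod_unit0 g)) card_unit.
- by rewrite (basis_mod_dimA b4) card_unit.
- by rewrite (basis_mod_dimA (basis_mod_theta g)) card_ord.
- by rewrite (basis_mod_dimA b3) card_ord.
- by rewrite (basis_mod_dimA (basis_mod_theta2 g)) card_prod card_ord.
Qed.
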